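(* For all $v,w\in\overline{C}$ we have $T(v)=T(w)$.
   Context: All graphs are simple. $\mathcal{G}^*$ denotes the class of graphs in which any two distinct odd cycles share at most one edge. Standing setting: $G\in\mathcal{G}^*$ is $2$-connected, and $C$ is a longest odd cycle of $G$ with $|C|\ge 5$. We also write $C$ for its vertex set. Let $\overline{C}=V(G)\setminus C$, assumed nonempty. For $v\in\overline{C}$ and $w\in C$, $v$ touches $w$ if there is a $v,w$-path meeting $C$ only at $w$. $T(v)=\{w\in C: v \text{ touches } w\}$. *)

From mathcomp Require Import all_boot.
Set Implicit Arguments. Unset Strict Implicit. Unset Printing Implicit Defensive.

Section Graphs.
Variables (V : finType) (e : rel V).

Definition simple_graph : Prop := symmetric e /\ irreflexive e.

Definition is_cycle (c : seq V) : bool :=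
  [&& 3 <= size c, uniq c & cycle e c].

Definition is_odd_cycle (c : seq V) : bool := is_cycle c && odd (size c).

Definition cycle_edges (c : seq V) : {set {set V}} :=
  [set [set x; next c x] | x in c].

(* the class G^*: two distinct odd cycles (distinct as subgraphs, i.e. with
   distinct edge sets) share at most one edge *)
Definition in_Gstar : Prop :=
  forall c1 c2 : seq V, is_odd_cycle c1 -> is_odd_cycle c2 ->
    cycle_edges c1 != cycle_edges c2 ->
    #|cycle_edges c1 :&: cycle_edges c2| <= 1.

Definition del_rel (x : V) : rel V := fun a b => [&& e a b, a != x & b != x].

Definition connected_graph : Prop := forall a b : V, connect e a b.

Definition two_connected : Prop :=
  2 < #|V| /\ connected_graph /\
  forall x a b : V, a != x -> b != x -> connect (del_rel x) a b.

Definition longest_odd_cycle (c : seq V) : Prop :=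
  is_odd_cycle c /\ forall c', is_odd_cycle c' -> size c' <= size c.

(* v touches w (w on C): there is a v,w-path (uniq vertex sequence v :: p,
   ending in w) meeting C only at w *)
Definition touches (C : seq V) (v w : V) : Prop :=
  w \in C /\
  exists p : seq V, [/\ path e v p, last v p = w, uniq (v :: p)
                      & all (fun u => u \notin C) (belast v p)].

(* T(v), as a predicate on vertices (sets of vertices = predicates) *)
Definition Tset (C : seq V) (v : V) : V -> Prop := fun w => touches C v w.

End Graphs.

(* If v and w lie in the same component of G - C, a path inside that component
   turns every v,x-path leaving C only at x into a w,x-path.  In G*, an ear of C
   (a path outside C between two vertices a, b of C) has odd length and a, b are
   adjacent on C: otherwise one of the two cycles formed by the ear and an arc of
   C is odd and shares two consecutive edges with C.  By 2-connectivity every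
   component of G - C touches two vertices of C, hence spans an ear.  If v touched
   x but w (in another component) did not, the two ears would sit on two distinct
   edges of C, and replacing both edges by the ears would give an odd cycle
   longer than C. *)
From mathcomp Require Import all_boot.
Set Implicit Arguments. Unset Strict Implicit. Unset Printing Implicit Defensive.

Section SeqPaths.
Variable T : eqType.
Implicit Types (s t : seq T) (a b c x y : T).

Lemma next_head x y s : next (x :: y :: s) x = y.
Proof. by rewrite /next /= eqxx. Qed.

Lemma next_second x y s : uniq (x :: y :: s) -> next (x :: y :: s) y = head x s.
Proof.
rewrite /= inE negb_or => /andP[/andP[xy _] _].
by case: s => [|z s]; rewrite /next /= eq_sym (negbTE xy) eqxx.
Qed.

Lemma next_eq_head_last b s a : uniq (b :: s) -> a \in b :: s ->
  next (b :: s) a = b -> last b s = a.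
Proof.
move=> U ain nab.
have := prev_next U a; rewrite nab prev_nth mem_head => <-.
move: U => /= /andP[bs _]; by rewrite (memNindex bs) (last_nth b).
Qed.

Lemma next_cat_prefix x s t c : uniq (x :: s ++ t) -> c \in x :: s ->
  c != last x s -> next (x :: s ++ t) c = next (x :: s) c.
Proof.
move=> U cin cnl; rewrite !next_nth cin -cat_cons mem_cat cin index_cat cin.
have : index c (x :: s) < size (x :: s) by rewrite index_mem.
rewrite /= ltnS leq_eqVlt => /orP[/eqP E|lt]; last by rewrite nth_cat lt.
by move: cnl; rewrite (last_nth x) -E nth_index // eqxx.
Qed.

Lemma belast_neq_last a p u : uniq (a :: p) -> u \in belast a p -> u != last a p.
Proof.
rewrite lastI rcons_uniq => /andP[lb _] ub; apply/negP => /eqP E.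
by rewrite -E ub in lb.
Qed.

Lemma path_all_rhs (r : rel T) (P : pred T) x p :
  (forall a b, r a b -> P b) -> path r x p -> all P p.
Proof. by move=> rP; elim: p x => //= y p IH x /andP[/rP -> /IH]. Qed.

End SeqPaths.

Section CycleEdges.
Variable V : finType.

Lemma cycle_edges_next (c : seq V) x : x \in c -> [set x; next c x] \in cycle_edges c.
Proof. by move=> xc; apply: (imset_f (fun x => [set x; next c x])). Qed.

Lemma cycle_edges_first_two (x y : V) s : uniq (x :: y :: s) -> s != [::] ->
  [/\ [set x; y] \in cycle_edges (x :: y :: s),
      [set y; head x s] \in cycle_edges (x :: y :: s)
    & [set x; y] != [set y; head x s]].
Proof.
move=> U sn; split.
- by have := @cycle_edges_next (x :: y :: s) x (mem_head _ _); rewrite next_head.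
- have := @cycle_edges_next (x :: y :: s) y; rewrite next_second //; apply.
  by rewrite !inE eqxx orbT.
apply/negP => /eqP /setP /(_ x); rewrite !inE eqxx /= => /esym.
move: U; rewrite /= inE negb_or => /andP[/andP[xy xs] _].
case/orP => /eqP xE; first by rewrite xE eqxx in xy.
by case: s sn xs xE => // z s _ + /= xE; rewrite xE mem_head.
Qed.

End CycleEdges.

Section Ears.
Variables (V : finType) (e : rel V).
Hypothesis e_sym : symmetric e.

Lemma path_rcons_rev a I b : path e a (rcons I b) -> path e b (rcons (rev I) a).
Proof.
have E : (fun z => e^~ z) =2 e by move=> x y; exact: e_sym.
have := rev_path e a (rcons I b).
by rewrite last_rcons belast_rcons rev_cons (eq_path E) => ->.
Qed.

Lemma is_odd_cycle_rot n (C : seq V) : is_odd_cycle e (rot n C) = is_odd_cycle e C.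
Proof. by rewrite /is_odd_cycle /is_cycle size_rot rot_uniq rot_cycle. Qed.

Definition ear (C : seq V) a b I := [/\ a \in C, b \in C, a != b, path e a (rcons I b)
  & [/\ uniq I, all (fun u => u \notin C) I & I != [::]]].

Lemma ear_rev C a b I : ear C a b I -> ear C b a (rev I).
Proof.
case=> aC bC ab pI [uI dI nI]; split; rewrite 1?(eq_sym b) ?path_rcons_rev //.
by rewrite rev_uniq all_rev -!size_eq0 size_rev in nI *.
Qed.

(* If [A = h :: _], the odd cycle [b :: A ++ a :: I] differs from
   [b :: A ++ a :: B] but shares with it the two edges at [h]. *)
Lemma Gstar_ear_arc_nil a b A B I : in_Gstar e ->
  is_odd_cycle e (b :: A ++ a :: B) -> ear (b :: A ++ a :: B) a b I ->
  odd (size (b :: A ++ a :: I)) -> A = [::].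
Proof.
move=> Gs oD [_ _ _ pI [uI dI nI]] oc1.
case: A oD dI oc1 => [//|h A] oD dI oc1; exfalso; rewrite cat_cons in oD dI oc1.
set D := b :: h :: A ++ a :: B in oD dI.
set c1 := b :: h :: A ++ a :: I in oc1.
have [/and3P[_ uD cD] _] := andP oD.
set X := rcons (b :: h :: A) a.
have DX : D = X ++ B by rewrite /X cat_rcons.
have c1X : c1 = X ++ I by rewrite /X cat_rcons.
have uc1 : uniq c1.
  move: uD; rewrite DX c1X !cat_uniq uI => /andP[-> _] /=; rewrite andbT.
  apply/hasPn => u uI'; apply/negP => uX.
  by move/allP: dI => /(_ u uI'); rewrite DX mem_cat uX.
have oc1' : is_odd_cycle e c1.
  rewrite /is_odd_cycle /is_cycle oc1 uc1 /= size_cat /= addnS !ltnS leq0n /=.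
  by move: cD pI; rewrite /D /c1 /= !rcons_cat !cat_path /= => /and3P[-> -> /andP[-> _]] ->.
have edges_neq : cycle_edges c1 != cycle_edges D.
  have [i iI] : exists i, i \in I by case: (I) nI => // i ? _; exists i; rewrite mem_head.
  have iD : i \notin D by move/allP: dI; apply.
  have ic1 : i \in c1 by rewrite c1X mem_cat iI orbT.
  apply/negP => /eqP E.
  have := cycle_edges_next ic1; rewrite E.
  case/imsetP => x xD /setP /(_ i); rewrite !inE eqxx => /esym /orP[] /eqP ix.
    by rewrite ix xD in iD.
  by rewrite ix mem_next xD in iD.
have tail_nil s : A ++ a :: s != [::] by case: (A).
have [e1c e2c neq] := cycle_edges_first_two uc1 (tail_nil I).
have [e1D e2D _] := cycle_edges_first_two uD (tail_nil B).
rewrite (_ : head b (A ++ a :: B) = head b (A ++ a :: I)) in e2D; last by case: (A).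
have : [set [set b; h]; [set h; head b (A ++ a :: I)]]
         \subset cycle_edges c1 :&: cycle_edges D.
  by apply/subsetP => E; rewrite !inE => /orP[] /eqP ->; rewrite ?e1c ?e1D ?e2c ?e2D.
move/subset_leq_card; rewrite cards2 neq.
by move/leq_trans/(_ (Gs _ _ oc1' oD edges_neq)).
Qed.

Lemma ear_eq_mem C D a b I : C =i D -> ear C a b I -> ear D a b I.
Proof.
move=> CD [aC bC ab pI [uI dI nI]]; split; rewrite -?CD //; split => //.
by rewrite -(eq_all (a1 := fun u => u \notin C)) // => u; rewrite CD.
Qed.

Lemma Gstar_ear_odd_adjacent C a b I : in_Gstar e -> is_odd_cycle e C -> ear C a b I ->
  odd (size I) /\ (next C a = b \/ next C b = a).
Proof.
move=> Gs oC eI; have [aC bC ab _ _] := eI.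
have uC : uniq C by case/andP: oC => /and3P[].
have [i s Ei] := rot_to bC.
have [A [B sAB]] : exists A B, s = A ++ a :: B.
  have : a \in s by move: aC; rewrite -(mem_rot i) Ei inE (negbTE ab).
  by case/splitPr => A B; exists A, B.
rewrite sAB in Ei.
have oD : is_odd_cycle e (b :: A ++ a :: B) by rewrite -Ei is_odd_cycle_rot.
have eD : ear (b :: A ++ a :: B) a b I by apply: ear_eq_mem eI => u; rewrite -Ei mem_rot.
have oAB : odd (size A + size B).
  by move: oD => /andP[_]; rewrite /= size_cat /= addnS negbK.
have [oc1|ec1] := boolP (odd (size (b :: A ++ a :: I))).
  have A0 := Gstar_ear_arc_nil Gs oD eD oc1.
  split; first by move: oc1; rewrite A0 /= negbK.
  by right; rewrite -(next_rot i uC) Ei A0 next_head.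
have E2 : rot (size (b :: A)) (b :: A ++ a :: B) = a :: B ++ b :: A.
  by rewrite -cat_cons rot_size_cat.
have oD2 : is_odd_cycle e (a :: B ++ b :: A) by rewrite -E2 is_odd_cycle_rot.
have eD2 : ear (a :: B ++ b :: A) b a (rev I).
  by apply: ear_eq_mem (ear_rev eD) => u; rewrite -E2 mem_rot.
have oc2 : odd (size (a :: B ++ b :: rev I)).
  move: ec1 oAB; rewrite /= !size_cat /= size_rev !addnS /= !oddD.
  by case: (odd (size A)); case: (odd (size B)); case: (odd (size I)).
have B0 := Gstar_ear_arc_nil Gs oD2 eD2 oc2.
split; first by move: oc2; rewrite B0 /= size_rev negbK.
have uD : uniq (rot i C) by rewrite rot_uniq.
left; rewrite -(next_rot i uC) -(next_rot (size (b :: A)) uD) Ei E2 B0.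
exact: next_head.
Qed.

Lemma ear_orient C x y I : ear C x y I -> next C x = y \/ next C y = x ->
  exists a b J, [/\ ear C a b J, next C a = b, size J = size I, {subset J <= I}
    & (a, b) = (x, y) \/ (a, b) = (y, x)].
Proof.
move=> eI [n|n]; first by exists x, y, I; split; auto.
exists y, x, (rev I); split => //; [exact: ear_rev | exact: size_rev | | by right].
by move=> u; rewrite mem_rev.
Qed.

Lemma cycle_cat_ear b s a I : uniq (b :: s) -> cycle e (b :: s) -> last b s = a ->
  path e a (rcons I b) -> uniq I -> {in I, forall u, u \notin b :: s} ->
  uniq (b :: s ++ I) /\ cycle e (b :: s ++ I).
Proof.
move=> us cs las pI uI dI; split.
  by rewrite -cat_cons cat_uniq us uI andbT; apply/hasPn.
by move: cs; rewrite /= rcons_path rcons_cat cat_path las => /andP[-> _].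
Qed.

Lemma cycle_splice_ears C a b I c d J : uniq C -> cycle e C ->
  ear C a b I -> ear C c d J -> next C a = b -> next C c = d -> c != a ->
  {in I, forall u, u \notin J} ->
  exists F, [/\ uniq F, cycle e F & size F = size C + size I + size J].
Proof.
move=> uC cC [aC bC ab pI [uI dI nI]] [cC' dC cd pJ [uJ dJ nJ]] nab ncd ca dIJ.
have [i s Ei] := rot_to bC.
have us : uniq (b :: s) by rewrite -Ei rot_uniq.
have cs : cycle e (b :: s) by rewrite -Ei rot_cycle.
have memE u : (u \in b :: s) = (u \in C) by rewrite -Ei mem_rot.
have las : last b s = a.
  apply: next_eq_head_last => //; first by rewrite memE.
  by rewrite -Ei (next_rot i uC).
have [uE cE] : uniq (b :: s ++ I) /\ cycle e (b :: s ++ I).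
  by apply: (cycle_cat_ear us cs las pI uI) => u uu; rewrite memE; move/allP: dI; apply.
have memE' u : (u \in b :: s ++ I) = (u \in C) || (u \in I) by rewrite -cat_cons mem_cat memE.
have nE : next (b :: s ++ I) c = d.
  by rewrite next_cat_prefix ?memE ?las // -Ei (next_rot i uC).
have dE : d \in b :: s ++ I by rewrite -nE mem_next memE' cC'.
have [k s' Ek] := rot_to dE.
have us' : uniq (d :: s') by rewrite -Ek rot_uniq.
have cs' : cycle e (d :: s') by rewrite -Ek rot_cycle.
have memF u : (u \in d :: s') = (u \in b :: s ++ I) by rewrite -Ek mem_rot.
have las' : last d s' = c.
  apply: next_eq_head_last => //; first by rewrite memF memE' cC'.
  by rewrite -Ek (next_rot k uE).
have [uF cF] : uniq (d :: s' ++ J) /\ cycle e (d :: s' ++ J).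
  apply: (cycle_cat_ear us' cs' las' pJ uJ) => u uJ'; rewrite memF memE' negb_or.
  by rewrite (allP dJ u uJ'); apply/negP => /dIJ; rewrite uJ'.
exists (d :: s' ++ J); split => //.
by rewrite -cat_cons size_cat -Ek size_rot -cat_cons size_cat -Ei size_rot.
Qed.

Lemma ear_of_walk C x y u W : x \in C -> y \in C -> x != y -> e x u ->
  path e u (rcons W y) -> all (fun w => w \notin C) (u :: W) ->
  exists I, ear C x y I /\ {subset I <= u :: W}.
Proof.
move=> xC yC xy xu pW WC.
case: (shortenP pW) (last_rcons u W y) => p pp up subp zy.
have subI : {subset belast u p <= u :: W}.
  move=> w wI; have /negbTE wz := belast_neq_last up wI.
  move: (mem_belast wI); rewrite !inE => /orP[-> //|/subp].
  by rewrite mem_rcons inE -zy wz /= => ->; rewrite orbT.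
exists (belast u p); split => //; split => //; first by rewrite -zy -lastI /= xu.
split.
- by move: up; rewrite lastI rcons_uniq => /andP[].
- by apply/allP => w /subI; apply: (allP WC).
- case: (p) zy => [|? ?] //= uy; have := allP WC u (mem_head _ _).
  by rewrite uy yC.
Qed.

Lemma longest_odd_cycle_disjoint_ears C x y I z z' J : in_Gstar e ->
  longest_odd_cycle e C -> ear C x y I -> ear C z z' J -> x != z -> x != z' ->
  {in I, forall u, u \notin J} -> False.
Proof.
move=> Gs [oC lC] eI eJ xz xz' dIJ.
have [/and3P[sC uC cC] _] := andP oC.
have [oI adjI] := Gstar_ear_odd_adjacent Gs oC eI.
have [oJ adjJ] := Gstar_ear_odd_adjacent Gs oC eJ.
have [a [b [I' [eI' nab sI subI abE]]]] := ear_orient eI adjI.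
have [c [d [J' [eJ' ncd sJ subJ cdE]]]] := ear_orient eJ adjJ.
have ca : c != a.
  apply/eqP => ca; have db : d = b by rewrite -ncd -nab ca.
  move: abE cdE xz xz'; rewrite ca db.
  by case=> -[-> ->] [] [E1 E2]; rewrite ?E1 ?E2 eqxx // => _.
have dIJ' : {in I', forall u, u \notin J'}.
  by move=> u /subI /dIJ; apply: contra => /subJ.
have [F [uF cF sF]] := cycle_splice_ears uC cC eI' eJ' nab ncd ca dIJ'.
have oF : is_odd_cycle e F.
  rewrite /is_odd_cycle /is_cycle uF cF sF !oddD sI sJ oI oJ.
  by case/andP: oC => _ ->; rewrite -addnA (leq_trans sC) ?leq_addr.
have := lC F oF; rewrite sF -addnA -{2}[size C]addn0 leq_add2l leqn0 addn_eq0 sI.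
by move: oI; case: (size I).
Qed.

End Ears.

Section Outside.
Variables (V : finType) (e : rel V).
Hypothesis e_sym : symmetric e.
Variable C : seq V.

Definition outside_rel : rel V := fun a b => [&& e a b, a \notin C & b \notin C].

Lemma outside_rel_sym : symmetric outside_rel.
Proof. by move=> a b; rewrite /outside_rel e_sym [(a \notin C) && _]andbC. Qed.

Lemma outside_path_notin v q : path outside_rel v q -> all (fun u => u \notin C) q.
Proof. by apply: path_all_rhs => a b /and3P[]. Qed.

Lemma connect_outside_notin v u : v \notin C -> connect outside_rel v u -> u \notin C.
Proof.
move=> vC /connectP[q /outside_path_notin qC ->].
by case/lastP: q qC => [//|q y]; rewrite last_rcons all_rcons => /andP[].
Qed.

Lemma touches_walk a q : path e a q -> last a q \in C ->
  {in a :: q, forall u, u \in C -> u = last a q} -> touches e C a (last a q).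
Proof.
move=> P; case: (shortenP P) => p' Pp' Up' sub lC hC; split => //.
exists p'; split => //; apply/allP => u ub; apply/negP => uC.
have ua : u \in a :: q.
  by move: (mem_belast ub); rewrite !inE => /orP[-> //|/sub ->]; rewrite orbT.
by move: (belast_neq_last Up' ub); rewrite (hC u ua uC) eqxx.
Qed.

Lemma touchesP v x : v \notin C ->
  touches e C v x <-> x \in C /\ exists2 u, connect outside_rel v u & e u x.
Proof.
move=> vC; split=> [[xC [p [pp lp _ bp]]]|[xC [u /connectP[q pq ->] ux]]].
  split=> //; case/lastP: p pp lp bp => [_ /= vx|q y]; first by rewrite vx xC in vC.
  rewrite rcons_path last_rcons belast_rcons => /andP[pq qy] yx bq.
  exists (last v q); last by rewrite -yx.
  apply/connectP; exists q => //; apply: sub_in_path bq pq => a b aC bC ab.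
  exact/and3P.
have := @touches_walk v (rcons q x); rewrite last_rcons; apply.
- by rewrite rcons_path ux andbT; apply: sub_path pq => a b /andP[].
- exact: xC.
move=> w; rewrite -rcons_cons mem_rcons inE => /orP[/eqP -> //|wq wC].
by move: wq; rewrite inE => /orP[/eqP wv|/(allP (outside_path_notin pq))];
  [by rewrite -wv wC in vC | rewrite wC].
Qed.

Lemma touches_connect v w x : v \notin C -> w \notin C ->
  connect outside_rel w v -> touches e C v x -> touches e C w x.
Proof.
move=> vC wC wv /(touchesP _ vC) [xC [u vu ux]].
by apply/touchesP => //; split => //; exists u => //; apply: connect_trans vu.
Qed.

Lemma path_first_hit v p : path e v p -> v \notin C -> last v p \in C ->
  exists u y, [/\ connect outside_rel v u, e u y, y \in C & y \in p].
Proof.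
elim: p v => [|h p IH] v /=; first by move=> _ /negbTE ->.
case/andP=> vh hp vC; have [hC _|hC pC] := boolP (h \in C).
  by exists v, h; rewrite mem_head.
have [u [y [hu uy yC yp]]] := IH h hp hC pC.
exists u, y; split => //; last by rewrite inE yp orbT.
by apply: connect_trans hu; apply: connect1; rewrite /outside_rel vh vC hC.
Qed.

Lemma touches_avoiding v c x0 : two_connected e -> c \in C -> c != x0 ->
  v \notin C -> v != x0 -> exists2 y, y != x0 & touches e C v y.
Proof.
move=> [_ [_ tc]] cC cx vC vx.
have /connectP[p pp cp] := tc x0 v c vx cx.
have pe : path e v p by apply: sub_path pp => a b /andP[].
have pC : last v p \in C by rewrite -cp.
have [u [y [vu uy yC yp]]] := path_first_hit pe vC pC.
exists y; last by apply/touchesP => //; split => //; exists u.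
by apply: (allP (path_all_rhs (P := fun u => u != x0) _ pp)) yp => a b /and3P[].
Qed.

Lemma ear_of_touches v x y : v \notin C -> touches e C v x -> touches e C v y -> x != y ->
  exists I, ear e C x y I /\ {in I, forall u, connect outside_rel v u}.
Proof.
move=> vC /(touchesP _ vC) [xC [u1 vu1 u1x]] /(touchesP _ vC) [yC [u2 vu2 u2y]] xy.
have /connectP[q pq u2E] : connect outside_rel u1 u2.
  by apply: connect_trans vu2; rewrite (sym_connect_sym outside_rel_sym).
have u1C := connect_outside_notin vC vu1.
have walk : path e u1 (rcons q y).
  by rewrite rcons_path -u2E u2y andbT; apply: sub_path pq => a b /andP[].
have xu1 : e x u1 by rewrite e_sym.
have qC : all (fun w => w \notin C) (u1 :: q) by rewrite /= u1C (outside_path_notin pq).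
have [I [eI subI]] := ear_of_walk xC yC xy xu1 walk qC.
by exists I; split => // w /subI /(path_connect pq); apply: connect_trans.
Qed.

End Outside.

Lemma exists_other (T : eqType) (s : seq T) x0 : uniq s -> 1 < size s ->
  exists2 c, c \in s & c != x0.
Proof.
case: s => [|c0 [|c1 s]] //= /andP[]; rewrite inE negb_or => /andP[c01 _] _ _.
have [E|] := eqVneq c0 x0; last by exists c0; rewrite ?mem_head.
by exists c1; rewrite ?inE ?eqxx ?orbT // -E eq_sym.
Qed.

Lemma touches_transfer (V : finType) (e : rel V) (C : seq V) v w x : symmetric e ->
  in_Gstar e -> two_connected e -> longest_odd_cycle e C ->
  v \notin C -> w \notin C -> touches e C v x -> touches e C w x.
Proof.
move=> e_sym Gs tc lC vC wC Tvx.
have [conn|nconn] := boolP (connect (outside_rel e C) w v).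
  exact: touches_connect conn Tvx.
have [[/andP[/and3P[sC uC _] _] _] [xC _]] := (lC, Tvx).
have [c cC cx] := exists_other x uC (ltnW sC).
have notin_neq u a : u \notin C -> a \in C -> u != a.
  by move=> uC' aC; apply: contraNneq uC' => ->.
have [y yx Tvy] := touches_avoiding tc cC cx vC (notin_neq v x vC xC).
have [z zx Twz] := touches_avoiding tc cC cx wC (notin_neq w x wC xC).
have [zC _] := Twz.
have [c' c'C c'z] := exists_other z uC (ltnW sC).
have [z' z'z Twz'] := touches_avoiding tc c'C c'z wC (notin_neq w z wC zC).
have [<-|z'x] := eqVneq z' x; first done.
rewrite eq_sym in yx; rewrite eq_sym in z'z.
have [I [eI connI]] := ear_of_touches e_sym vC Tvx Tvy yx.
have [J [eJ connJ]] := ear_of_touches e_sym wC Twz Twz' z'z.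
exfalso; apply: (longest_odd_cycle_disjoint_ears e_sym Gs lC eI eJ); rewrite 1?eq_sym //.
move=> u /connI vu; apply/negP => /connJ wu; move: nconn.
by rewrite (connect_trans wu) // (sym_connect_sym (outside_rel_sym e_sym C)).
Qed.

Theorem mainTheorem7 (V : finType) (e : rel V) (C : seq V) :
  simple_graph e -> in_Gstar e -> two_connected e ->
  longest_odd_cycle e C -> 5 <= size C ->
  forall v w : V, v \notin C -> w \notin C -> forall x : V, Tset e C v x <-> Tset e C w x.
Proof.
move=> [e_sym _] Gs tc lC _ v w vC wC x.
by split; apply: touches_transfer.
Qed.
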